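(* Let $n\ge2$, let $a_1,\dots,a_n$ be real numbers, $C(t)=\sum_{j=1}^n a_j\cos jt$, $S(t)=\sum_{j=1}^n a_j\sin jt$. Let $1\le m<n$ and let $t_1,\dots,t_m\in(0,\pi)$ be pairwise distinct with $$S(t_1)=\dots=S(t_m)=0,\qquad C(t_1)=\dots=C(t_m).$$ Define numbers $a^{(j)}_k$ recursively: $a^{(0)}_k=a_k$ ($k=1,\dots,n$), and for $j=1,\dots,m$ set $a^{(j)}_{n-j+1}=a^{(j)}_{n-j+2}=0$ and, for $k=n-j+1,n-j,\dots,2$ (in this order), $$a^{(j)}_{k-1}=2a^{(j-1)}_k+2\cos t_j\,a^{(j)}_k-a^{(j)}_{k+1}.$$ Then $$C(t_1)=\dots=C(t_m)=-\frac{a^{(m)}_m}{2^m}.$$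
   Context: The recursion determines $a^{(m)}_m$ uniquely from $a_2,\dots,a_n$ and $t_1,\dots,t_m$. *)

From Stdlib Require Import Reals Lra Lia.
Open Scope R_scope.

Definition Csum (a : nat -> R) (n : nat) (t : R) : R :=
  sum_f 1 n (fun j => a j * cos (INR j * t)).

Definition Ssum (a : nat -> R) (n : nat) (t : R) : R :=
  sum_f 1 n (fun j => a j * sin (INR j * t)).

(* With N = n-j+2 (top index of level j),
   write b d := a^{(j)}_{N-d}.  Then b 0 = b 1 = 0 and
   b (d+2) = 2 a^{(j-1)}_{N-(d+1)} + 2 c b (d+1) - b d,  c = cos t_j.
   [step prev c N d] returns the pair (b d, b (d+1)). *)
Fixpoint step (prev : nat -> R) (c : R) (N : nat) (d : nat) : R * R :=
  match d with
  | O => (0, 0)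
  | S d' =>
      let p := step prev c N d' in
      (snd p, 2 * prev (N - S d')%nat + 2 * c * snd p - fst p)
  end.

(* coef a t n j k = a^{(j)}_k  (meaningful for 1 <= k <= n-j+2, j <= m < n).
   Level j+1 has top index N = n-(j+1)+2 = n+1-j. *)
Fixpoint coef (a : nat -> R) (t : nat -> R) (n : nat) (j : nat) : nat -> R :=
  match j with
  | O => a
  | S j' => fun k =>
      let N := (n + 1 - j')%nat in
      fst (step (coef a t n j') (cos (t (S j'))) N (N - k)%nat)
  end.

(* With b = a^{(j)}, summation by parts turns the recursion into the division identities
     2 S_{j-1}(x) = 2 (cos x - cos t_j) S_j(x) + b_0 sin x,
     2 C_{j-1}(x) = 2 (cos x - cos t_j) C_j(x) + b_0 cos x - b_1,
   where S_j, C_j are the sine and cosine sums with coefficients a^{(j)} and b_0 is one more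
   step of the recursion.  If S_{j-1} vanishes and C_{j-1} is constant on the remaining nodes
   t_j, ..., t_m, evaluating at t_j (where sin t_j <> 0) gives b_0 = 0 and
   b_1 = -2 C_{j-1}(t_j), and dividing by cos t_i - cos t_j <> 0 shows that S_j and C_j vanish
   on t_{j+1}, ..., t_m.  Hence b_1 = -2 C(t_1) at level 1 and b_0 = b_1 = 0 at the later
   levels, so the recursion propagates the zeros: a^{(j)}_k = 0 for k < j and
   a^{(j)}_j = 2 a^{(j-1)}_{j-1} = -2^j C(t_1). *)
From Pilot Require Import Defs.
From Stdlib Require Import Reals Lra Lia.
Open Scope R_scope.

Fixpoint sum1 (f : nat -> R) (M : nat) : R :=
  match M with O => 0 | S M' => sum1 f M' + f M end.

Lemma sum_f_sum1 (f : nat -> R) (n : nat) : (1 <= n)%nat -> sum_f 1 n f = sum1 f n.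
Proof.
  induction n as [|n IH]; intros Hn; [lia|].
  destruct n as [|n].
  - unfold sum_f; simpl. ring.
  - unfold sum_f in *.
    replace (S (S n) - 1)%nat with (S n) by lia.
    replace (S n - 1)%nat with n in IH by lia.
    cbn [sum_f_R0 sum1]. rewrite IH by lia.
    replace (S n + 1)%nat with (S (S n)) by lia. reflexivity.
Qed.

Lemma sum1_three_term (p b g : nat -> R) (c d : R) (M : nat) :
  (forall k, (1 <= k <= M)%nat -> 2 * p k = b (k - 1)%nat + b (S k) - 2 * c * b k) ->
  (forall k, (1 <= k)%nat -> g (S k) + g (k - 1)%nat = 2 * d * g k) ->
  2 * sum1 (fun k => p k * g k) M =
  2 * (d - c) * sum1 (fun k => b k * g k) M
  + b 0%nat * g 1%nat - b 1%nat * g 0%nat + b (S M) * g M - b M * g (S M).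
Proof.
  intros Hp Hg. induction M as [|M IH]; cbn [sum1]; [ring|].
  rewrite Rmult_plus_distr_l, IH by (intros k Hk; apply Hp; lia).
  pose proof (Hp (S M) ltac:(lia)) as HpM. replace (S M - 1)%nat with M in HpM by lia.
  pose proof (Hg (S M) ltac:(lia)) as HgM. replace (S M - 1)%nat with M in HgM by lia.
  replace (2 * (p (S M) * g (S M))) with (2 * p (S M) * g (S M)) by ring.
  rewrite HpM.
  replace (g (S (S M))) with (2 * d * g (S M) - g M) by lra.
  ring.
Qed.

Lemma sin_nat_recurrence (x : R) (k : nat) : (1 <= k)%nat ->
  sin (INR (S k) * x) + sin (INR (k - 1) * x) = 2 * cos x * sin (INR k * x).
Proof.
  intros Hk. rewrite S_INR, minus_INR, Rmult_plus_distr_r, Rmult_minus_distr_r by lia.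
  rewrite sin_plus, sin_minus. simpl INR. rewrite Rmult_1_l. ring.
Qed.

Lemma cos_nat_recurrence (x : R) (k : nat) : (1 <= k)%nat ->
  cos (INR (S k) * x) + cos (INR (k - 1) * x) = 2 * cos x * cos (INR k * x).
Proof.
  intros Hk. rewrite S_INR, minus_INR, Rmult_plus_distr_r, Rmult_minus_distr_r by lia.
  rewrite cos_plus, cos_minus. simpl INR. rewrite Rmult_1_l. ring.
Qed.

Lemma recurrence_zero_prefix (p b : nat -> R) (c : R) (J : nat) : (1 <= J)%nat ->
  b 0%nat = 0 -> b 1%nat = 0 ->
  (forall k, (1 <= k <= J)%nat -> 2 * p k = b (k - 1)%nat + b (S k) - 2 * c * b k) ->
  (forall k, (1 <= k < J)%nat -> p k = 0) ->
  (forall k, (k <= J)%nat -> b k = 0) /\ b (S J) = 2 * p J.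
Proof.
  intros HJ Hb0 Hb1 Hrec Hp.
  assert (Hpair : forall k, (k < J)%nat -> b k = 0 /\ b (S k) = 0).
  { induction k as [|k IH]; intros Hk; [auto|].
    destruct (IH ltac:(lia)) as [Hbk HbSk]. split; [exact HbSk|].
    pose proof (Hrec (S k) ltac:(lia)) as HrecSk.
    rewrite Hp, HbSk in HrecSk by lia. replace (S k - 1)%nat with k in HrecSk by lia.
    lra. }
  destruct (Hpair (J - 1)%nat ltac:(lia)) as [HbJ1 HbJ].
  replace (S (J - 1)) with J in HbJ by lia.
  split.
  - intros k Hk. destruct (Nat.eq_dec k J) as [->|Hne]; [exact HbJ|].
    apply Hpair. lia.
  - pose proof (Hrec J ltac:(lia)) as HrecJ. rewrite HbJ1, HbJ in HrecJ. lra.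
Qed.

Section Levels.
Variables (n : nat) (a t : nat -> R).

Notation coef := (coef a t n).

Lemma coef_top_zero (j k : nat) : (n - j <= k)%nat -> coef (S j) k = 0.
Proof.
  intros Hk. simpl. destruct (n + 1 - j - k)%nat as [|[|d]] eqn:Hd; [reflexivity|reflexivity|lia].
Qed.

(* The paper's recursion covers k <= n - j; beyond that both sides vanish (then j >= 1),
   so it holds for every 1 <= k <= n. *)
Lemma coef_recurrence (j k : nat) : (1 <= k <= n)%nat ->
  2 * coef j k = coef (S j) (k - 1) + coef (S j) (S k) - 2 * cos (t (S j)) * coef (S j) k.
Proof.
  intros Hk. destruct (Nat.le_gt_cases k (n - j)) as [Hle|Hgt].
  - cbn [Defs.coef].
    set (N := (n + 1 - j)%nat).
    replace (N - (k - 1))%nat with (S (S (N - S k))) by (unfold N; lia).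
    replace (N - k)%nat with (S (N - S k)) by (unfold N; lia).
    cbn [step fst snd].
    replace (N - S (N - S k))%nat with k by (unfold N; lia).
    ring.
  - destruct j as [|j]; [lia|].
    rewrite !coef_top_zero by lia. ring.
Qed.

(* Every level is summed up to n: the coefficients of level j + 1 vanish from index n - j on. *)
Definition Slevel (j : nat) (x : R) : R := sum1 (fun k => coef j k * sin (INR k * x)) n.
Definition Clevel (j : nat) (x : R) : R := sum1 (fun k => coef j k * cos (INR k * x)) n.

Lemma Slevel_step (j : nat) (x : R) :
  2 * Slevel j x = 2 * (cos x - cos (t (S j))) * Slevel (S j) x + coef (S j) 0 * sin x.
Proof.
  unfold Slevel.
  rewrite (sum1_three_term _ (coef (S j)) (fun k => sin (INR k * x)) (cos (t (S j))) (cos x))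
    by (intros; first [apply coef_recurrence | apply sin_nat_recurrence]; lia).
  rewrite (coef_top_zero j n), (coef_top_zero j (S n)) by lia.
  simpl INR. rewrite Rmult_0_l, Rmult_1_l, sin_0. ring.
Qed.

Lemma Clevel_step (j : nat) (x : R) :
  2 * Clevel j x =
  2 * (cos x - cos (t (S j))) * Clevel (S j) x + coef (S j) 0 * cos x - coef (S j) 1.
Proof.
  unfold Clevel.
  rewrite (sum1_three_term _ (coef (S j)) (fun k => cos (INR k * x)) (cos (t (S j))) (cos x))
    by (intros; first [apply coef_recurrence | apply cos_nat_recurrence]; lia).
  rewrite (coef_top_zero j n), (coef_top_zero j (S n)) by lia.
  simpl INR. rewrite Rmult_0_l, Rmult_1_l, cos_0. ring.
Qed.

Lemma Slevel_0 (x : R) : (1 <= n)%nat -> Slevel 0 x = Ssum a n x.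
Proof. intros Hn. unfold Ssum. rewrite sum_f_sum1 by exact Hn. reflexivity. Qed.

Lemma Clevel_0 (x : R) : (1 <= n)%nat -> Clevel 0 x = Csum a n x.
Proof. intros Hn. unfold Csum. rewrite sum_f_sum1 by exact Hn. reflexivity. Qed.

Lemma coef_low_at_node (j : nat) : 0 < t (S j) < PI -> Slevel j (t (S j)) = 0 ->
  coef (S j) 0 = 0 /\ coef (S j) 1 = -2 * Clevel j (t (S j)).
Proof.
  intros [Ht0 HtPI] HS.
  pose proof (sin_gt_0 _ Ht0 HtPI) as Hsin.
  pose proof (Slevel_step j (t (S j))) as Sstep.
  pose proof (Clevel_step j (t (S j))) as Cstep.
  rewrite HS, Rminus_diag in Sstep. rewrite Rminus_diag in Cstep.
  assert (Hb0 : coef (S j) 0 = 0).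
  { apply (Rmult_eq_reg_r (sin (t (S j)))); lra. }
  rewrite Hb0 in Cstep. split; [exact Hb0 | lra].
Qed.

End Levels.

Section Nodes.
Variables (n m : nat) (a t : nat -> R).
Hypothesis hm1 : (1 <= m)%nat.
Hypothesis hmn : (m < n)%nat.
Hypothesis ht : forall i, (1 <= i <= m)%nat -> 0 < t i < PI.
Hypothesis hdist :
  forall i j, (1 <= i <= m)%nat -> (1 <= j <= m)%nat -> i <> j -> t i <> t j.
Hypothesis hS : forall i, (1 <= i <= m)%nat -> Ssum a n (t i) = 0.
Hypothesis hC : forall i, (1 <= i <= m)%nat -> Csum a n (t i) = Csum a n (t 1%nat).

Notation coef := (coef a t n).
Notation Slevel := (Slevel n a t).
Notation Clevel := (Clevel n a t).

Lemma cos_nodes_neq (i j : nat) : (1 <= i <= m)%nat -> (1 <= j <= m)%nat -> i <> j ->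
  cos (t i) - cos (t j) <> 0.
Proof.
  intros Hi Hj Hij Heq. apply (hdist i j Hi Hj Hij).
  pose proof (ht i Hi). pose proof (ht j Hj).
  apply cos_inj; lra.
Qed.

Lemma next_level_vanishes (j : nat) : (j < m)%nat ->
  (forall i, (j < i <= m)%nat -> Slevel j (t i) = 0 /\ Clevel j (t i) = Clevel j (t (S j))) ->
  forall i, (S j < i <= m)%nat -> Slevel (S j) (t i) = 0 /\ Clevel (S j) (t i) = 0.
Proof.
  intros Hj Hnodes i Hi.
  destruct (Hnodes (S j) ltac:(lia)) as [HSj _].
  destruct (coef_low_at_node n a t j (ht (S j) ltac:(lia)) HSj) as [Hb0 Hb1].
  destruct (Hnodes i ltac:(lia)) as [HSi HCi].
  pose proof (Slevel_step n a t j (t i)) as Sstep.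
  pose proof (Clevel_step n a t j (t i)) as Cstep.
  rewrite HSi, Hb0 in Sstep. rewrite HCi, Hb0, Hb1 in Cstep.
  pose proof (cos_nodes_neq i (S j) ltac:(lia) ltac:(lia) ltac:(lia)) as Hneq.
  split; apply (Rmult_eq_reg_l (2 * (cos (t i) - cos (t (S j))))); lra.
Qed.

Lemma nodes_level (j : nat) : (j <= m)%nat ->
  forall i, (j < i <= m)%nat -> Slevel j (t i) = 0 /\ Clevel j (t i) = Clevel j (t (S j)).
Proof.
  induction j as [|j IH]; intros Hj i Hi.
  - rewrite !(Clevel_0 n a t _ ltac:(lia)), (Slevel_0 n a t _ ltac:(lia)).
    split; [apply hS | apply hC]; lia.
  - destruct (next_level_vanishes j ltac:(lia) (IH ltac:(lia)) i Hi) as [HSi HCi].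
    destruct (next_level_vanishes j ltac:(lia) (IH ltac:(lia)) (S (S j)) ltac:(lia))
      as [_ HCj].
    split; [exact HSi | rewrite HCi, HCj; reflexivity].
Qed.

Lemma coef_low_first : coef 1 0 = 0 /\ coef 1 1 = -2 * Csum a n (t 1%nat).
Proof.
  destruct (nodes_level 0 ltac:(lia) 1 ltac:(lia)) as [HS1 _].
  rewrite <- (Clevel_0 n a t) by lia.
  exact (coef_low_at_node n a t 0 (ht 1 ltac:(lia)) HS1).
Qed.

Lemma coef_low_later (j : nat) : (1 <= j < m)%nat -> coef (S j) 0 = 0 /\ coef (S j) 1 = 0.
Proof.
  intros Hj. destruct j as [|j]; [lia|].
  destruct (nodes_level (S j) ltac:(lia) (S (S j)) ltac:(lia)) as [HSj _].
  destruct (next_level_vanishes j ltac:(lia) (nodes_level j ltac:(lia)) (S (S j)) ltac:(lia))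
    as [_ HCj].
  destruct (coef_low_at_node n a t (S j) (ht (S (S j)) ltac:(lia)) HSj) as [Hb0 Hb1].
  rewrite HCj, Rmult_0_r in Hb1. split; assumption.
Qed.

Lemma coef_diagonal (j : nat) : (1 <= j <= m)%nat ->
  (forall k, (k < j)%nat -> coef j k = 0) /\ coef j j = - 2 ^ j * Csum a n (t 1%nat).
Proof.
  induction j as [|j IH]; intros Hj; [lia|].
  destruct (Nat.eq_dec j 0) as [->|Hj0].
  - destruct coef_low_first as [Hb0 Hb1]. split.
    + intros k Hk. replace k with 0%nat by lia. exact Hb0.
    + rewrite Hb1. simpl. ring.
  - destruct (IH ltac:(lia)) as [Hzero Hdiag].
    destruct (coef_low_later j ltac:(lia)) as [Hb0 Hb1].
    destruct (recurrence_zero_prefix (coef j) (coef (S j)) (cos (t (S j))) j ltac:(lia) Hb0 Hb1)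
      as [HbJ HbSJ].
    + intros k Hk. rewrite coef_recurrence by lia. ring.
    + intros k Hk. apply Hzero. lia.
    + split; [intros k Hk; apply HbJ; lia|].
      rewrite HbSJ, Hdiag. simpl. ring.
Qed.

End Nodes.

Theorem corollary3 (n m : nat) (a : nat -> R) (t : nat -> R)
  (hn : (2 <= n)%nat) (hm1 : (1 <= m)%nat) (hmn : (m < n)%nat)
  (ht : forall i, (1 <= i <= m)%nat -> 0 < t i < PI)
  (hdist : forall i j, (1 <= i <= m)%nat -> (1 <= j <= m)%nat -> i <> j -> t i <> t j)
  (hS : forall i, (1 <= i <= m)%nat -> Ssum a n (t i) = 0)
  (hC : forall i, (1 <= i <= m)%nat -> Csum a n (t i) = Csum a n (t 1%nat)) :
  forall i, (1 <= i <= m)%nat ->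
    Csum a n (t i) = - coef a t n m m / 2 ^ m.
Proof.
  intros i Hi.
  destruct (coef_diagonal n m a t hm1 hmn ht hdist hS hC m ltac:(lia)) as [_ Hdiag].
  rewrite hC, Hdiag by exact Hi. field. apply pow_nonzero. lra.
Qed.
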